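(* Let $n,k\ge 0$ be integers with $n\ge 2k-1$. For every $\alpha\in F_n(2,k)$, the list $\mathcal{F}(\alpha)$ is suffix partitioned.
   Context: The weight of a binary word is its number of 1's. $F_n(2,k)$ is the set of binary words of length $n$ and weight $k$ containing no two consecutive 1's. A homogeneous transposition of a binary word exchanges a 1 and a 0 such that no 1 occurs strictly between the two exchanged positions. For a set $S$ of binary words of the same length and weight and $\alpha\in S$, the list obtained by applying the greedy algorithm for $S$ to $\alpha$ is built as follows: start with the list $(\alpha)$; repeatedly, for the last word $w$ of the current list, among all words obtainable from $w$ by one homogeneous transposition that lie in $S$ and do not already occur in the list, choose the one obtained by transposing the leftmost possible 1 with (among transpositions of that 1) the leftmost possible 0, and append it; stop when no such word exists. $\mathcal{F}(\alpha)$ denotes the list obtained by applying the greedy algorithm for $F_n(2,k)$ to $\alpha\in F_n(2,k)$. A list is suffix partitioned if, for every word $s$, the words of the list having suffix $s$ occupy consecutive positions. *)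

(* Binary words are sequences of booleans (true = 1, false = 0),
   read left to right: position 0 is the leftmost letter. *)
From mathcomp Require Import all_boot.
Set Implicit Arguments. Unset Strict Implicit. Unset Printing Implicit Defensive.

Definition word := seq bool.

Definition weight (w : word) : nat := count id w.

Definition no11 (w : word) : bool :=
  all (fun i => ~~ (nth false w i && nth false w i.+1)) (iota 0 (size w)).

Definition inF (n k : nat) (w : word) : bool :=
  [&& size w == n, weight w == k & no11 w].

Definition swap (w : word) (i j : nat) : word :=
  set_nth false (set_nth false w i false) j true.

Definition homog (w : word) (i j : nat) : bool :=
  [&& i < size w, j < size w, nth false w i, ~~ nth false w j &
   all (fun p => ~~ nth false w p)
       (iota (minn i j).+1 ((maxn i j - minn i j).-1))].

(* Candidate next words from the last word w, for the greedy algorithm on S,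
   listed in the order (leftmost 1 first, then leftmost 0): row-major in (i,j). *)
Definition candidates (S : pred word) (L : seq word) (w : word) : seq word :=
  [seq swap w ij.1 ij.2 |
     ij <- [seq (i, j) | i <- iota 0 (size w), j <- iota 0 (size w)] &
     homog w ij.1 ij.2 && (swap w ij.1 ij.2 \in S)
     && (swap w ij.1 ij.2 \notin L)].

Fixpoint greedy_aux (fuel : nat) (S : pred word) (L : seq word) (w : word)
  : seq word :=
  match fuel with
  | 0 => L
  | f.+1 =>
      match candidates S L w with
      | [::] => L
      | v :: _ => greedy_aux f S (rcons L v) v
      end
  end.

(* Since the list never repeats a word and all its
   words have length size alpha, at most 2^(size alpha) steps can be taken, so
   the fuel 2^(size alpha) is enough for the algorithm to stop by itself. *)
Definition greedy (S : pred word) (alpha : word) : seq word :=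
  greedy_aux (2 ^ size alpha) S [:: alpha] alpha.

Definition calF (n k : nat) (alpha : word) : seq word := greedy (inF n k) alpha.

Definition suffix_partitioned (L : seq word) : Prop :=
  forall (s : word) (a b c : nat),
    a <= b -> b <= c -> c < size L ->
    suffix s (nth [::] L a) -> suffix s (nth [::] L c) ->
    suffix s (nth [::] L b).

(* A word of F_n(2,k) with n >= 2 ends in 0 or in 01.  As long as the greedy
   algorithm can move the 1's of the prefix it copies the greedy algorithm on the prefix,
   because moves involving the suffix come lexicographically later; hence F(alpha) is a
   block of words ending in 0 followed by a block ending in 01, or the other way round,
   each block being a greedy list of shorter length with the suffix appended.  A suffix
   s either occurs in every word of a block, in none, or amounts to a suffix of the
   prefixes, and no s other than the empty one is shared by both blocks, so suffix
   partitioning propagates by induction on n.  Gluing the blocks requires knowing where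
   each greedy list stops: at the word whose 1's are packed against the right end, or,
   when it starts there, at another packed word; and a list starting at a packed word
   visits all of them. *)

From mathcomp Require Import all_boot zify.
Set Implicit Arguments. Unset Strict Implicit. Unset Printing Implicit Defensive.

Notation nthw w p := (nth false w p).

Lemma eq_word (u v : word) :
  size u = size v -> (forall p, nthw u p = nthw v p) -> u = v.
Proof. by move=> hs hp; apply: (eq_from_nth (x0 := false)) => // i _; apply: hp. Qed.

Lemma count_id_nth0 (w : word) : (forall p, nthw w p = false) -> count id w = 0.
Proof.
elim: w => [|b w IH] //= h.
by move: (h 0) => /= ->; rewrite IH // => p; exact: (h p.+1).
Qed.

Lemma no11P w : reflect (forall p, ~~ (nthw w p && nthw w p.+1)) (no11 w).
Proof.
apply: (iffP allP) => H p.
- case: (ltnP p (size w)) => hp; first by apply: H; rewrite mem_iota.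
  by rewrite nth_default.
- by move=> _; apply: H.
Qed.

Lemma no11_behead b w : no11 (b :: w) -> no11 w.
Proof. by move/no11P => H; apply/no11P => p; exact: (H p.+1). Qed.

Lemma mem_inF n k w : (w \in inF n k) = inF n k w.
Proof. by []. Qed.

Lemma size_inF n k w : inF n k w -> size w = n.
Proof. by case/and3P => /eqP. Qed.

Lemma nth_swap w i j p :
  nthw (swap w i j) p = if p == j then true else if p == i then false else nthw w p.
Proof. by rewrite /swap nth_set_nth /= nth_set_nth. Qed.

Lemma size_swap w i j : size (swap w i j) = maxn j.+1 (maxn i.+1 (size w)).
Proof. by rewrite /swap !size_set_nth. Qed.

Lemma homog_size w i j : homog w i j -> (i < size w) && (j < size w).
Proof. by case/and5P=> -> ->. Qed.

Lemma homog_gap w i j p : homog w i j -> minn i j < p < maxn i j -> ~~ nthw w p.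
Proof. by case/and5P=> _ _ _ _ /allP H hp; apply: H; rewrite mem_iota; lia. Qed.

Lemma homog_neq w i j : homog w i j -> i != j.
Proof. by case/and5P => _ _ h1 h2 _; apply/eqP => e; subst; rewrite h1 in h2. Qed.

(** * The greedy choice is the lexicographically least admissible move *)

Definition admissible (S : pred word) (L : seq word) (w : word) (ij : nat * nat) :=
  [&& homog w ij.1 ij.2, swap w ij.1 ij.2 \in S & swap w ij.1 ij.2 \notin L].

Definition index_pairs N : seq (nat * nat) :=
  [seq (i, j) | i <- iota 0 N, j <- iota 0 N].

Definition lex_lt (a b : nat * nat) : bool := (a.1 < b.1) || (a.1 == b.1) && (a.2 < b.2).

Lemma candidatesE S L w : candidates S L w =
  [seq swap w ij.1 ij.2 | ij <- filter (admissible S L w) (index_pairs (size w))].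
Proof.
by rewrite /candidates; congr map; apply: eq_filter => ij; rewrite /admissible andbA.
Qed.

Lemma admissible_homog S L w ij : admissible S L w ij -> homog w ij.1 ij.2.
Proof. by case/and3P. Qed.

Lemma admissible_mem S L w ij : admissible S L w ij -> swap w ij.1 ij.2 \in S.
Proof. by case/and3P. Qed.

Lemma admissible_index_pairs S L w ij :
  admissible S L w ij -> ij \in index_pairs (size w).
Proof.
case: ij => i j /admissible_homog /homog_size /= hij.
by apply/allpairsP; exists (i, j) => /=; rewrite !mem_iota; split => //; lia.
Qed.

Lemma pairwise_lex_allpairs a n M :
  pairwise lex_lt [seq (i, j) | i <- iota a n, j <- iota 0 M].
Proof.
elim: n a => [|n IH] a //=.
rewrite pairwise_cat IH andbT; apply/andP; split.
- apply/allrelP => x y /mapP [j _ ->] /allpairsP [[i' j'] /= [hi _ ->]].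
  by move: hi; rewrite mem_iota /lex_lt /=; lia.
- rewrite pairwise_map; have := iota_ltn_sorted 0 M.
  rewrite sorted_pairwise; last by move=> ???; lia.
  by apply: sub_pairwise => x y /=; rewrite /lex_lt /=; lia.
Qed.

Lemma candidates_cons S L w v r : candidates S L w = v :: r ->
  exists ij, [/\ admissible S L w ij, v = swap w ij.1 ij.2 &
    forall ij', admissible S L w ij' -> ij = ij' \/ lex_lt ij ij'].
Proof.
rewrite candidatesE; case E: (filter _ _) => [|ij rest] //= [hv _].
have := pairwise_filter (admissible S L w) (pairwise_lex_allpairs 0 (size w) (size w)).
move=> hpw.
rewrite E /= in hpw.
have : ij \in filter (admissible S L w) (index_pairs (size w)) by rewrite E mem_head.
rewrite mem_filter => /andP [hij _]; exists ij; split => // ij' hv'.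
have : ij' \in filter (admissible S L w) (index_pairs (size w)).
  by rewrite mem_filter hv' (admissible_index_pairs hv').
rewrite E inE => /orP [/eqP -> | hin]; first by left.
by right; case/andP: hpw => /allP /(_ _ hin).
Qed.

Lemma candidates_nil S L w :
  candidates S L w = [::] <-> forall ij, ~~ admissible S L w ij.
Proof.
rewrite candidatesE; split => [E0 ij | H].
- apply/negP => hv.
  have : ij \in filter (admissible S L w) (index_pairs (size w)).
    by rewrite mem_filter hv (admissible_index_pairs hv).
  by move: E0; case: (filter _ _).
- case E: (filter _ _) => [|ij rest] //.
  have : ij \in filter (admissible S L w) (index_pairs (size w)) by rewrite E mem_head.
  by rewrite mem_filter (negbTE (H ij)).
Qed.

Lemma candidates_lexmin S L w ij : admissible S L w ij ->
  (forall ij', admissible S L w ij' -> ij = ij' \/ lex_lt ij ij') ->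
  exists r, candidates S L w = swap w ij.1 ij.2 :: r.
Proof.
move=> hv hmin; case E: (candidates S L w) => [|v r].
  by move/candidates_nil: E => /(_ ij); rewrite hv.
have [ij' [hv' -> hmin']] := candidates_cons E; exists r.
have [->|h1] := hmin' _ hv; first by [].
have [->|h2] := hmin _ hv'; first by [].
by move: h1 h2; rewrite /lex_lt; lia.
Qed.

Inductive greedy_run (S : pred word) : seq word -> word -> seq word -> Prop :=
| RunNil L w : greedy_run S L w [::]
| RunCons L w v r T : candidates S L w = v :: r -> greedy_run S (rcons L v) v T ->
    greedy_run S L w (v :: T).

Lemma greedy_run_cat S L w T1 T2 : greedy_run S L w T1 ->
  greedy_run S (L ++ T1) (last w T1) T2 -> greedy_run S L w (T1 ++ T2).
Proof.
elim=> [L0 w0|L0 w0 v r T0 hc hg IH] /=; first by rewrite cats0.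
by move=> h; apply: RunCons hc _; apply: IH; rewrite cat_rcons.
Qed.

Lemma greedy_aux_run S L w T f : greedy_run S L w T ->
  candidates S (L ++ T) (last w T) = [::] -> greedy_aux f S L w = L ++ take f T.
Proof.
move=> hg; elim: hg f => [L0 w0|L0 w0 v r T0 hc hg IH] [|f] /=; rewrite ?cats0 //.
- by move=> ->.
- by move=> h; rewrite hc IH cat_rcons.
Qed.

Lemma greedy_run_closed (S : pred word) L w T :
  greedy_run S L w T -> S w -> forall x, x \in w :: T -> S x.
Proof.
elim=> [L0 w0 hw x|L0 w0 v r T0 hc hg IH hw x]; first by rewrite inE => /eqP ->.
have [ij [/admissible_mem hs hvE _]] := candidates_cons hc; rewrite -hvE in hs.
by rewrite inE => /predU1P [-> //|]; exact: IH.
Qed.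

Lemma suffix_partitioned_take L t :
  suffix_partitioned L -> suffix_partitioned (take t L).
Proof.
move=> H s a b c hab hbc; rewrite size_take => hc.
have hct : c < t by move: hc; case: (ltnP t (size L)); lia.
have hcL : c < size L by move: hc; case: (ltnP t (size L)); lia.
by rewrite !nth_take //; try lia; apply: H.
Qed.

Lemma suffix_partitioned_small L : size L <= 1 -> suffix_partitioned L.
Proof. by move=> hL s a b c hab hbc hc; have -> : b = a by lia. Qed.

Lemma suffix_partitioned_cat X Y : suffix_partitioned X -> suffix_partitioned Y ->
  (forall s, {in X, forall x, ~~ suffix s x} \/ {in Y, forall y, ~~ suffix s y}
     \/ forall z, suffix s z) ->
  suffix_partitioned (X ++ Y).
Proof.
move=> HX HY Hs s a b c hab hbc; rewrite size_cat => hc; rewrite !nth_cat.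
case: (ltnP c (size X)) => hcX.
  have hbX := leq_ltn_trans hbc hcX.
  by rewrite (leq_ltn_trans hab hbX) hbX; exact: HX.
case: (ltnP a (size X)) => haX.
- move=> h1 h2; case: (Hs s) => [H|[H|H]]; last exact: H.
  + by move: (H _ (mem_nth [::] haX)); rewrite h1.
  + have : c - size X < size Y by lia.
    by move=> /(mem_nth [::]) /H; rewrite h2.
- have hb : size X <= b by lia.
  rewrite ltnNge hb /=; apply: HY; move: hab hbc hc hcX haX hb;
  set sx := size X; set sy := size Y; lia.
Qed.

Lemma suffix_partitioned_map f A : suffix_partitioned A ->
  (forall s, (forall u, suffix s (f u)) \/ (forall u, ~~ suffix s (f u)) \/
     exists s', forall u, suffix s (f u) = suffix s' u) ->
  suffix_partitioned (map f A).
Proof.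
move=> HA Hs s a b c hab hbc; rewrite size_map => hc.
rewrite !(nth_map [::]); try lia.
case: (Hs s) => [H|[H|[s' H]]]; first by rewrite H.
- by rewrite (negbTE (H _)).
- by rewrite !H; exact: HA.
Qed.

Definition app0 (u : word) : word := rcons u false.
Definition app01 (u : word) : word := u ++ [:: false; true].

Lemma app01E u : app01 u = rcons (rcons u false) true.
Proof. by rewrite /app01 -!cats1 -catA. Qed.

Lemma last_app0 x u : last x (app0 u) = false.
Proof. by rewrite last_rcons. Qed.

Lemma last_app01 x u : last x (app01 u) = true.
Proof. by rewrite app01E last_rcons. Qed.

Lemma app0_inj : injective app0.
Proof. by move=> u v; apply: rcons_injl. Qed.

Lemma app01_inj : injective app01.
Proof. by move=> u v; rewrite !app01E => h; exact: (rcons_injl _ (rcons_injl _ h)). Qed.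

Lemma app0_neq_app01 u v : app0 u <> app01 v.
Proof. by move=> /(congr1 (last false)); rewrite last_app0 last_app01. Qed.

Lemma mem_app01_map_app0 u L : (app01 u \in map app0 L) = false.
Proof. by apply/mapP => -[x _ E]; exact: app0_neq_app01 (esym E). Qed.

Lemma mem_app0_map_app01 u L : (app0 u \in map app01 L) = false.
Proof. by apply/mapP => -[x _ E]; exact: app0_neq_app01 E. Qed.

Lemma mem_app0_cat L0 L u : all (last false) L0 ->
  (app0 u \in L0 ++ map app0 L) = (u \in L).
Proof.
move=> hL0; rewrite mem_cat (mem_map app0_inj).
by case E: (app0 u \in L0) => //; move: (allP hL0 _ E); rewrite last_app0.
Qed.

Lemma mem_app01_cat L0 L u : all (fun x => ~~ last false x) L0 ->
  (app01 u \in L0 ++ map app01 L) = (u \in L).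
Proof.
move=> hL0; rewrite mem_cat (mem_map app01_inj).
by case E: (app01 u \in L0) => //; move: (allP hL0 _ E); rewrite last_app01.
Qed.

Lemma all_last_map_app0 L : all (fun x => ~~ last false x) (map app0 L).
Proof. by apply/allP => x /mapP [u _ ->]; rewrite last_app0. Qed.

Lemma all_last_map_app01 L : all (last false) (map app01 L).
Proof. by apply/allP => x /mapP [u _ ->]; rewrite last_app01. Qed.

Lemma mem_map_app0 {N} {L} : forall u, size u = N -> (app0 u \in map app0 L) = (u \in L).
Proof. by move=> u _; rewrite (mem_map app0_inj). Qed.

Lemma mem_map_app01 {N} {L} :
  forall u, size u = N -> (app01 u \in map app01 L) = (u \in L).
Proof. by move=> u _; rewrite (mem_map app01_inj). Qed.

Lemma nth_app0 u p : nthw (app0 u) p = nthw u p.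
Proof. by rewrite nth_rcons; case: ltnP => // h; rewrite nth_default //; case: eqP. Qed.

Lemma nth_app01 u p : nthw (app01 u) p = nthw u p || (p == (size u).+1).
Proof.
rewrite nth_cat; case: ltnP => h.
  by rewrite (_ : (p == (size u).+1) = false) ?orbF //; lia.
rewrite (nth_default _ h) /=; case E: (p - size u) => [|[|q]] /=; rewrite ?nth_nil; lia.
Qed.

Lemma size_app0 u : size (app0 u) = (size u).+1.
Proof. exact: size_rcons. Qed.

Lemma size_app01 u : size (app01 u) = (size u).+2.
Proof. by rewrite size_cat addn2. Qed.

Lemma inF_app0 n k u : inF n.+1 k (app0 u) = inF n k u.
Proof.
rewrite /inF size_app0 eqSS; congr [&& _, _ & _].
- by rewrite /weight /app0 -cats1 count_cat /= !addn0.
- by apply/no11P/no11P => H p; move: (H p); rewrite !nth_app0.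
Qed.

Lemma inF_app01 n k u : inF n.+2 k.+1 (app01 u) = inF n k u.
Proof.
rewrite /inF size_app01 eqSS /weight count_cat /= addn0 add0n addn1 eqSS.
congr [&& _, _ & _]; apply/no11P/no11P => H p; move: (H p); rewrite !nth_app01;
  set b1 := nthw u p; set b2 := nthw u p.+1; set s := size u.
- lia.
- have e1 : s <= p -> b1 = false by move=> h; exact: nth_default.
  have e2 : s <= p.+1 -> b2 = false by move=> h; exact: nth_default.
  lia.
Qed.

Lemma inF_app_cases n k a : inF n.+2 k a ->
  (exists2 a', a = app0 a' & inF n.+1 k a') \/
  (exists k', exists2 b, k = k'.+1 /\ a = app01 b & inF n k' b).
Proof.
case/lastP: a => [|a' x]; first by case/and3P.
case: x => ha; last by left; exists a'; rewrite // -inF_app0.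
right; have hs : size a' = n.+1 by move: (size_inF ha); rewrite size_rcons; case.
case/lastP: a' hs ha => [|b y] // hs ha.
have hy : y = false.
  case/and3P: ha => _ _ /no11P /(_ n); rewrite !nth_rcons !size_rcons.
  move: hs; rewrite size_rcons => -[->]; rewrite ltnSn /= ltnn eqxx /=.
  by rewrite ltnn eqxx andbT; case: y.
subst y; have : 0 < k.
  by case/and3P: ha => _ /eqP <- _; rewrite /weight -cats1 count_cat /=; lia.
case: k ha => [|k'] // ha _; exists k', b; first by rewrite app01E.
by rewrite -(inF_app01 n k' b) app01E.
Qed.

Lemma homog_app0 w i j : j < size w -> homog (app0 w) i j = homog w i j.
Proof.
move=> hj; rewrite /homog size_app0 !nth_app0.
under eq_all do rewrite nth_app0.
case hi: (nthw w i); last by rewrite !andbF.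
have hi' : i < size w by case: (ltnP i (size w)) => // h; rewrite nth_default in hi.
by rewrite hi' hj ltnS (ltnW hi') ltnS (ltnW hj).
Qed.

Lemma homog_app01 w i j :
  i < (size w).+1 -> j != size w -> homog (app01 w) i j = homog w i j.
Proof.
move=> hi hj; rewrite /homog size_app01 !nth_app01.
have -> : (i == (size w).+1) = false by lia.
rewrite orbF; case hni: (nthw w i); last by rewrite !andbF.
have hi' : i < size w by case: (ltnP i (size w)) => // h; rewrite nth_default in hni.
case: (ltnP j (size w)) => hj'.
- have -> : (j == (size w).+1) = false by lia.
  rewrite hi'; have -> : i < (size w).+2 by lia.
  have -> : j < (size w).+2 by lia.
  rewrite /=.
  congr (_ && _); first by rewrite orbF.
  apply: eq_in_all => p; rewrite mem_iota => hp.
  by rewrite nth_app01 (_ : (p == (size w).+1) = false) ?orbF //; lia.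
- rewrite andbF; case: (ltnP j (size w).+2) => hj2; last by rewrite andbF.
  have -> : j == (size w).+1 by lia.
  by rewrite orbT /= !andbF.
Qed.

Lemma swap_app0 w i j : i < size w -> j < size w -> swap (app0 w) i j = app0 (swap w i j).
Proof.
move=> hi hj; apply: eq_word; first by rewrite size_swap !size_app0 size_swap; lia.
by move=> p; rewrite nth_swap !nth_app0 nth_swap.
Qed.

Lemma swap_app01 w i j :
  i < size w -> j < size w -> swap (app01 w) i j = app01 (swap w i j).
Proof.
move=> hi hj; apply: eq_word; first by rewrite size_swap !size_app01 size_swap; lia.
move=> p; rewrite nth_swap !nth_app01 nth_swap size_swap.
have -> : maxn j.+1 (maxn i.+1 (size w)) = size w by lia.
case: (eqVneq p j) => [->|_]; first by rewrite (_ : (j == (size w).+1) = false) //; lia.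
by case: (eqVneq p i) => [->|_] //; rewrite (_ : (i == (size w).+1) = false) //; lia.
Qed.

Lemma admissible_app0 N k L0 L w i j : size w = N -> j < N ->
  (forall u, size u = N -> (app0 u \in L0) = (u \in L)) ->
  admissible (inF N.+1 k) L0 (app0 w) (i, j) = admissible (inF N k) L w (i, j).
Proof.
move=> hs hj hL; rewrite /admissible /= homog_app0 ?hs //.
case hh: (homog w i j) => //=; have /andP [hi hj'] := homog_size hh.
by rewrite swap_app0 // !mem_inF inF_app0 hL // size_swap; lia.
Qed.

Lemma admissible_app01 N k L0 L w i j : size w = N -> i < N.+1 ->
  (forall u, size u = N -> (app01 u \in L0) = (u \in L)) ->
  admissible (inF N.+2 k.+1) L0 (app01 w) (i, j) = admissible (inF N k) L w (i, j).
Proof.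
move=> hs hi hL; case: (eqVneq j N) => [->|hjN].
- have -> : admissible (inF N k) L w (i, N) = false.
    by apply/negP => /admissible_homog /homog_size /andP [_]; rewrite hs ltnn.
  apply/negP => /and3P [hh]; rewrite mem_inF => /and3P [_ _ /no11P H] _.
  have hni : nthw (app01 w) i by case/and5P: hh.
  have hiN : i < N.
    move: hni; rewrite nth_app01 hs; case: (ltnP i N) => // hh2.
    by rewrite nth_default ?hs //=; lia.
  move: (H N); rewrite !nth_swap eqxx nth_app01 hs /=.
  have -> : (N.+1 == N) = false by lia.
  have -> : (N.+1 == i) = false by lia.
  by rewrite eqxx orbT.
- rewrite /admissible /= homog_app01 ?hs //.
  case hh: (homog w i j) => //=; have /andP [hi' hj'] := homog_size hh.
  by rewrite swap_app01 // !mem_inF inF_app01 hL // size_swap; lia.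
Qed.

(* A move into the appended 0 must use the rightmost 1, so it comes lexicographically
   after the lifted greedy move. *)
Lemma candidates_app0 N k L0 L w v r : inF N k w ->
  (forall u, size u = N -> (app0 u \in L0) = (u \in L)) ->
  candidates (inF N k) L w = v :: r ->
  exists r', candidates (inF N.+1 k) L0 (app0 w) = app0 v :: r'.
Proof.
move=> hw hL hc; have hs := size_inF hw.
have [[i0 j0] [hv -> hmin]] := candidates_cons hc.
have hh0 := admissible_homog hv; have /andP [hi0 hj0] := homog_size hh0.
rewrite /= hs in hi0 hj0.
have hv' : admissible (inF N.+1 k) L0 (app0 w) (i0, j0).
  by rewrite (admissible_app0 _ _ hs hj0 hL).
rewrite /= -swap_app0 ?hs //.
apply: (candidates_lexmin hv') => -[i j] hvij; case: (ltnP j N) => hj.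
  by apply: hmin; rewrite -(admissible_app0 _ _ hs hj hL).
have hh := admissible_homog hvij; have /andP [hi hjN] := homog_size hh.
rewrite /= size_app0 hs in hi hjN; have ej : j = N by lia. subst j.
have hni : nthw w i by move: hh => /and5P [_ _]; rewrite nth_app0.
have hni0 : nthw w i0 by case/and5P: hh0.
have hiN : i < N by case: (ltnP i N) => // h; rewrite nth_default ?hs in hni.
case: (ltnP i0 i) => hii; first by right; rewrite /lex_lt /=; lia.
case: (eqVneq i0 i) => [<-|hne]; first by right; rewrite /lex_lt /=; lia.
by have := homog_gap (p := i0) hh; rewrite nth_app0 hni0 /=; lia.
Qed.

Lemma candidates_nil_app0 N k L0 L w i j : inF N k w ->
  (forall u, size u = N -> (app0 u \in L0) = (u \in L)) ->
  candidates (inF N k) L w = [::] ->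
  admissible (inF N.+1 k) L0 (app0 w) (i, j) -> j = N.
Proof.
move=> hw hL /candidates_nil hc hv; have hs := size_inF hw.
have /andP [_ hj] := homog_size (admissible_homog hv).
rewrite /= size_app0 hs in hj; case: (ltnP j N) => h; last by lia.
by move: (hc (i, j)); rewrite -(admissible_app0 _ _ hs h hL) hv.
Qed.

Lemma candidates_app01 N k L0 L w v r : inF N k w ->
  (forall u, size u = N -> (app01 u \in L0) = (u \in L)) ->
  candidates (inF N k) L w = v :: r ->
  exists r', candidates (inF N.+2 k.+1) L0 (app01 w) = app01 v :: r'.
Proof.
move=> hw hL hc; have hs := size_inF hw.
have [[i0 j0] [hv -> hmin]] := candidates_cons hc.
have /andP [hi0 hj0] := homog_size (admissible_homog hv); rewrite /= hs in hi0 hj0.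
have hv' : admissible (inF N.+2 k.+1) L0 (app01 w) (i0, j0).
  by rewrite (admissible_app01 _ _ hs _ hL) //; lia.
rewrite /= -swap_app01 ?hs //.
apply: (candidates_lexmin hv') => -[i j] hvij; case: (ltnP i N.+1) => hi.
  by apply: hmin; rewrite -(admissible_app01 _ _ hs hi hL).
by right; rewrite /lex_lt /=; lia.
Qed.

Lemma candidates_nil_app01 N k L0 L w i j : inF N k w ->
  (forall u, size u = N -> (app01 u \in L0) = (u \in L)) ->
  candidates (inF N k) L w = [::] ->
  admissible (inF N.+2 k.+1) L0 (app01 w) (i, j) -> i = N.+1.
Proof.
move=> hw hL /candidates_nil hc hv; have hs := size_inF hw.
have /andP [hi _] := homog_size (admissible_homog hv).
rewrite /= size_app01 hs in hi; case: (ltnP i N.+1) => h; last by lia.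
by move: (hc (i, j)); rewrite -(admissible_app01 _ _ hs h hL) hv.
Qed.

Lemma greedy_run_app0 N k L0 L w T : greedy_run (inF N k) L w T -> inF N k w ->
  all (last false) L0 ->
  greedy_run (inF N.+1 k) (L0 ++ map app0 L) (app0 w) (map app0 T).
Proof.
move=> hg; elim: hg => [L1 w1|L1 w1 v r T1 hc hg IH] hw hL0 /=; first exact: RunNil.
have [r' hc'] := candidates_app0 hw (fun u _ => mem_app0_cat L1 u hL0) hc.
apply: RunCons hc' _; rewrite rcons_cat -map_rcons; apply: IH => //.
have [ij [hv -> _]] := candidates_cons hc; exact: admissible_mem hv.
Qed.

Lemma greedy_run_app01 N k L0 L w T : greedy_run (inF N k) L w T -> inF N k w ->
  all (fun x => ~~ last false x) L0 ->
  greedy_run (inF N.+2 k.+1) (L0 ++ map app01 L) (app01 w) (map app01 T).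
Proof.
move=> hg; elim: hg => [L1 w1|L1 w1 v r T1 hc hg IH] hw hL0 /=; first exact: RunNil.
have [r' hc'] := candidates_app01 hw (fun u _ => mem_app01_cat L1 u hL0) hc.
apply: RunCons hc' _; rewrite rcons_cat -map_rcons; apply: IH => //.
have [ij [hv -> _]] := candidates_cons hc; exact: admissible_mem hv.
Qed.

(** * Packed words *)

Definition packed n k d : word :=
  mkseq (fun p => (d <= p) && (p < d + (2 * k - 1)) && ((p - d) %% 2 == 0)) n.

Definition packed_right n k := packed n k (n.+1 - 2 * k).

Lemma size_packed n k d : size (packed n k d) = n.
Proof. exact: size_mkseq. Qed.

Lemma nth_packed n k d p :
  nthw (packed n k d) p = [&& p < n, d <= p, p < d + (2 * k - 1) & (p - d) %% 2 == 0].
Proof.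
case: (ltnP p n) => h; first by rewrite nth_mkseq //= andbA.
by rewrite nth_default // size_packed.
Qed.

Lemma packed0 n d d' : packed n 0 d = packed n 0 d'.
Proof. by apply: eq_word; rewrite ?size_packed // => p; rewrite !nth_packed; lia. Qed.

Lemma packed_inj n k d d' : 0 < k -> d + 2 * k <= n.+1 -> d' + 2 * k <= n.+1 ->
  packed n k d = packed n k d' -> d = d'.
Proof.
move=> hk hd hd' E.
have := congr1 (nth false ^~ d) E; have := congr1 (nth false ^~ d') E.
by rewrite /= !nth_packed; lia.
Qed.

Lemma packed_app0 n k d : d + (2 * k - 1) <= n -> packed n.+1 k d = app0 (packed n k d).
Proof.
move=> h; apply: eq_word; first by rewrite size_app0 !size_packed.
by move=> p; rewrite nth_app0 !nth_packed; lia.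
Qed.

Lemma packed_app01 n k d : d + 2 * k = n.+1 -> packed n.+2 k.+1 d = app01 (packed n k d).
Proof.
move=> h; apply: eq_word; first by rewrite size_app01 !size_packed.
by move=> p; rewrite nth_app01 !nth_packed size_packed; lia.
Qed.

Lemma packed_right_app01 n k :
  2 * k <= n.+1 -> packed_right n.+2 k.+1 = app01 (packed_right n k).
Proof.
move=> h; rewrite /packed_right (_ : n.+3 - 2 * k.+1 = n.+1 - 2 * k); last by lia.
by apply: packed_app01; lia.
Qed.

Lemma inF_packed n k d : 2 * k <= n.+1 -> d <= n.+1 - 2 * k -> inF n k (packed n k d).
Proof.
elim/ltn_ind: n k d => n IH [|k] d hk hd.
  rewrite /inF size_packed eqxx /weight count_id_nth0 /=.
    by apply/no11P => p; rewrite nth_packed; lia.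
  by move=> p; rewrite nth_packed; lia.
case: (ltnP (d + (2 * k.+1 - 1)) n) => h.
  case: n IH hk hd h => [|n] IH hk hd h; first by lia.
  by rewrite packed_app0 ?inF_app0; [apply: IH|]; lia.
case: n IH hk hd h => [|[|n]] IH hk hd h; first by lia.
  by have [-> ->] : k = 0 /\ d = 0 by lia.
by rewrite packed_app01 ?inF_app01; [apply: IH|]; lia.
Qed.

Lemma no11_count_bound w : no11 w -> 2 * count id w <= (size w).+1.
Proof.
have [n] := ubnP (size w); elim: n w => [|n IH] [|b [|c w]] //= hs hn.
- by clear hn; case: b.
- move: hn; case: b => hn.
  + have hc : c = false by move/no11P: hn => /(_ 0) /=; case: c.
    subst c; have := IH w _ (no11_behead (no11_behead hn)); rewrite /=; lia.
  + have := IH (c :: w) _ (no11_behead hn); rewrite /=; lia.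
Qed.

Lemma inF_weight_bound n k w : inF n k w -> 2 * k <= n.+1.
Proof. by case/and3P => /eqP <- /eqP <- /no11_count_bound. Qed.

Lemma inF0_packed n w : inF n 0 w -> w = packed n 0 0.
Proof.
case/and3P => /eqP hs /eqP hk _; apply: eq_word; first by rewrite size_packed.
move=> p; rewrite nth_packed.
have -> : [&& p < n, 0 <= p, p < 0 + (2 * 0 - 1) & (p - 0) %% 2 == 0] = false by lia.
apply/negP => E; have hp : p < size w by case: ltnP E => // h; rewrite nth_default.
have : has id w by apply/hasP; exists (nth false w p); [exact: mem_nth | ].
by rewrite has_count /weight in hk *; rewrite hk.
Qed.

Lemma count1_packed w : count id w = 1 -> w = packed (size w) 1 (index true w).
Proof.
elim: w => [|b w IH] //=; case: b => /= h.
- have h0 : count id w = 0 by lia.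
  apply: eq_word; first by rewrite size_packed.
  move=> [|p]; first by rewrite nth_packed.
  rewrite nth_packed /=; case E: (nthw w p); last by rewrite andbF.
  have hp : p < size w by case: ltnP E => // h1; rewrite nth_default.
  have : has id w by apply/hasP; exists (nth false w p); [exact: mem_nth | ].
  by rewrite has_count h0.
- apply: eq_word; first by rewrite size_packed.
  move=> [|p]; rewrite nth_packed /=; first lia.
  by rewrite {1}(IH h) nth_packed; lia.
Qed.

Lemma inF1_packed n w : inF n 1 w -> exists2 d, d <= n.+1 - 2 & w = packed n 1 d.
Proof.
case/and3P => /eqP hs /eqP hk _.
exists (index true w); last by rewrite -hs; exact: count1_packed.
have : has id w by rewrite has_count; move: hk; rewrite /weight => ->.
have -> : index true w = find id w by apply: eq_find; case.
by rewrite has_find -hs; set q := find id w; lia.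
Qed.

(** * Crossing between the blocks ending in 0 and in 01 *)

Lemma swap_app0_packed N k d : d + 2 * k <= N ->
  swap (app0 (packed N.+1 k.+1 d)) (d + 2 * k) N.+1 = app01 (packed N k d).
Proof.
move=> hd; apply: eq_word.
  by rewrite size_swap size_app0 size_packed size_app01 size_packed; lia.
move=> p; rewrite nth_swap nth_app01 size_packed nth_packed.
case: (eqVneq p N.+1) => [e|h1]; first by rewrite orbT.
case: (eqVneq p (d + 2 * k)) => [e|h2]; first by subst p; lia.
by rewrite nth_app0 nth_packed; lia.
Qed.

Lemma swap_app01_packed N k d : d + 2 * k <= N ->
  swap (app01 (packed N k d)) N.+1 (d + 2 * k) = app0 (packed N.+1 k.+1 d).
Proof.
move=> hd; apply: eq_word.
  by rewrite size_swap size_app01 size_app0 !size_packed; lia.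
move=> p; rewrite nth_swap nth_app0 nth_packed.
case: (eqVneq p (d + 2 * k)) => [e|h1]; first by subst p; lia.
case: (eqVneq p N.+1) => [e|h2]; first by subst p; lia.
by rewrite nth_app01 size_packed nth_packed; lia.
Qed.

Lemma admissible_app0_packed N k d L0 : d + 2 * k <= N ->
  admissible (inF N.+2 k.+1) L0 (app0 (packed N.+1 k.+1 d)) (d + 2 * k, N.+1)
  = (app01 (packed N k d) \notin L0).
Proof.
move=> hd; rewrite /admissible /= swap_app0_packed // mem_inF inF_app01.
rewrite inF_packed; try lia.
have -> // : homog (app0 (packed N.+1 k.+1 d)) (d + 2 * k) N.+1.
rewrite /homog size_app0 size_packed !nth_app0 !nth_packed; apply/and5P; split; try lia.
by apply/allP => p; rewrite mem_iota => hp; rewrite nth_app0 nth_packed; lia.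
Qed.

Lemma admissible_app01_packed N k d L0 : d + 2 * k <= N ->
  admissible (inF N.+2 k.+1) L0 (app01 (packed N k d)) (N.+1, d + 2 * k)
  = (app0 (packed N.+1 k.+1 d) \notin L0).
Proof.
move=> hd; rewrite /admissible /= swap_app01_packed // mem_inF inF_app0.
rewrite inF_packed; try lia.
have -> // : homog (app01 (packed N k d)) N.+1 (d + 2 * k).
rewrite /homog size_app01 size_packed !nth_app01 !size_packed !nth_packed /=.
apply/and5P; split; try lia.
by apply/allP => p; rewrite mem_iota => hp; rewrite nth_app01 size_packed nth_packed; lia.
Qed.

(* [d + 2 * k] is the position of the rightmost 1 of [packed N.+1 k.+1 d]. *)
Lemma admissible_app0_packed_last N k d L0 i : d + 2 * k <= N ->
  admissible (inF N.+2 k.+1) L0 (app0 (packed N.+1 k.+1 d)) (i, N.+1) -> i = d + 2 * k.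
Proof.
move=> hd /admissible_homog /= hh.
have : nthw (packed N.+1 k.+1 d) i by move: (hh) => /and5P [_ _]; rewrite nth_app0.
rewrite nth_packed; case: (ltnP i (d + 2 * k)) => h; last by lia.
by have := homog_gap (p := d + 2 * k) hh; rewrite nth_app0 nth_packed; lia.
Qed.

Lemma candidates_app0_packed N k d L0 L : d + 2 * k <= N ->
  (forall u, size u = N.+1 -> (app0 u \in L0) = (u \in L)) ->
  candidates (inF N.+1 k.+1) L (packed N.+1 k.+1 d) = [::] ->
  if app01 (packed N k d) \in L0
  then candidates (inF N.+2 k.+1) L0 (app0 (packed N.+1 k.+1 d)) = [::]
  else exists r,
    candidates (inF N.+2 k.+1) L0 (app0 (packed N.+1 k.+1 d)) = app01 (packed N k d) :: r.
Proof.
move=> hd hL hc; have hw : inF N.+1 k.+1 (packed N.+1 k.+1 d) by apply: inF_packed; lia.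
have H ij : admissible (inF N.+2 k.+1) L0 (app0 (packed N.+1 k.+1 d)) ij ->
    ij = (d + 2 * k, N.+1).
  case: ij => i j hv; have ej := candidates_nil_app0 hw hL hc hv; subst j.
  by rewrite (admissible_app0_packed_last hd hv).
case: ifP => hin.
- apply/candidates_nil => ij; apply/negP => hv; have E := H _ hv; subst ij.
  by move: hv; rewrite admissible_app0_packed // hin.
- have hv : admissible (inF N.+2 k.+1) L0 (app0 (packed N.+1 k.+1 d)) (d + 2 * k, N.+1).
    by rewrite admissible_app0_packed // hin.
  have [r hr] := candidates_lexmin hv (fun ij' hv' => or_introl (esym (H _ hv'))).
  by exists r; rewrite hr /= swap_app0_packed.
Qed.

(* [k = 0 -> d = 0] picks [packed N 0 0] among the equal words [packed N 0 d]. *)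
Lemma admissible_app01_packed_stuck N k d L0 L : (k = 0 -> d = 0) -> d + 2 * k <= N.+1 ->
  (forall u, size u = N -> (app01 u \in L0) = (u \in L)) ->
  candidates (inF N k) L (packed N k d) = [::] ->
  forall i j, admissible (inF N.+2 k.+1) L0 (app01 (packed N k d)) (i, j) ->
    i = N.+1 /\ d + 2 * k <= j <= N.
Proof.
move=> hk0 hd hL hc i j hv; have hw : inF N k (packed N k d) by apply: inF_packed; lia.
have ei := candidates_nil_app01 hw hL hc hv; subst i; split => //; clear hL hc hw.
have hh := admissible_homog hv; have hin := admissible_mem hv.
rewrite /= mem_inF in hh hin.
move: (hh) => /and5P [_ hj _ hnj _].
rewrite size_app01 size_packed in hj; rewrite nth_app01 size_packed nth_packed in hnj.
case: k hk0 hd hv hh hin hnj => [|k] hk0 hd hv hh hin hnj; first by rewrite hk0 //; lia.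
case: (ltnP j (d + 2 * k.+1)) => hlt; last by lia.
exfalso; case: (ltnP j (d + 2 * k)) => h1.
  by have := homog_gap (p := d + 2 * k) hh; rewrite nth_app01 size_packed nth_packed; lia.
case: (eqVneq j (d + 2 * k)) => e; first by move: hnj; rewrite e; lia.
have ej : j = (d + 2 * k).+1 by lia. subst j.
move: hin => /and3P [_ _ /no11P /(_ (d + 2 * k))]; rewrite !nth_swap.
have -> : (d + 2 * k == (d + 2 * k).+1) = false by lia.
have -> : (d + 2 * k == N.+1) = false by lia.
by rewrite eqxx nth_app01 size_packed nth_packed; lia.
Qed.

Lemma candidates_app01_packed N k d L0 L : (k = 0 -> d = 0) -> d + 2 * k <= N ->
  (forall u, size u = N -> (app01 u \in L0) = (u \in L)) ->
  candidates (inF N k) L (packed N k d) = [::] ->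
  app0 (packed N.+1 k.+1 d) \notin L0 ->
  exists r, candidates (inF N.+2 k.+1) L0 (app01 (packed N k d))
    = app0 (packed N.+1 k.+1 d) :: r.
Proof.
move=> hk0 hd hL hc hin.
have Hr := admissible_app01_packed_stuck hk0 (leqW hd) hL hc.
have hv : admissible (inF N.+2 k.+1) L0 (app01 (packed N k d)) (N.+1, d + 2 * k).
  by rewrite admissible_app01_packed.
rewrite -swap_app01_packed //; apply: (candidates_lexmin hv) => -[i j] /Hr [-> hj].
case: (eqVneq j (d + 2 * k)) => [->|hne]; first by left.
by right; rewrite /lex_lt /=; lia.
Qed.

Lemma candidates_app01_packed_right N k d L0 L : (k = 0 -> d = 0) -> d + 2 * k = N.+1 ->
  (forall u, size u = N -> (app01 u \in L0) = (u \in L)) ->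
  candidates (inF N k) L (packed N k d) = [::] ->
  candidates (inF N.+2 k.+1) L0 (app01 (packed N k d)) = [::].
Proof.
move=> hk0 hd hL hc; have Hr := admissible_app01_packed_stuck hk0 (eq_leq hd) hL hc.
by apply/candidates_nil => -[i j]; apply/negP => /Hr [_]; lia.
Qed.

Lemma candidates_app01_packed0 N L0 L :
  (forall u, size u = N -> (app01 u \in L0) = (u \in L)) ->
  candidates (inF N 0) L (packed N 0 0) = [::] ->
  (forall j, j <= N -> app0 (packed N.+1 1 j) \in L0) ->
  candidates (inF N.+2 1) L0 (app01 (packed N 0 0)) = [::].
Proof.
move=> hL hc hall.
have Hr := admissible_app01_packed_stuck (k := 0) (d := 0) (fun=> erefl) (leq0n _) hL hc.
apply/candidates_nil => -[i j]; apply/negP => hv; have [ei hj] := Hr _ _ hv; subst i.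
have := admissible_app01_packed L0 (_ : j + 2 * 0 <= N); rewrite muln0 addn0 => E.
by move: hv; rewrite (packed0 N 0 j) E ?hall //; lia.
Qed.

Lemma candidates_inF0 n L w : inF n 0 w -> candidates (inF n 0) L w = [::].
Proof.
move/inF0_packed => ->; apply/candidates_nil => -[i j]; apply/negP.
by move/admissible_homog => /and5P [_ _]; rewrite nth_packed; lia.
Qed.

Lemma candidates_inF_len1 k L w : inF 1 k w -> candidates (inF 1 k) L w = [::].
Proof.
move/size_inF => hs; apply/candidates_nil => -[i j]; apply/negP => /admissible_homog hh.
by have := homog_neq hh; have /andP [] := homog_size hh; rewrite hs /=; lia.
Qed.

Lemma suffix_app0_cases s :
  (forall u, suffix s (app0 u)) \/ (forall u, ~~ suffix s (app0 u)) \/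
  exists s', forall u, suffix s (app0 u) = suffix s' u.
Proof.
case/lastP: s => [|s' []]; first by left => u; rewrite suffix0s.
- by right; left => u; rewrite suffix_rcons.
- by right; right; exists s' => u; rewrite suffix_rcons.
Qed.

Lemma suffix_app01_cases s :
  (forall u, suffix s (app01 u)) \/ (forall u, ~~ suffix s (app01 u)) \/
  exists s', forall u, suffix s (app01 u) = suffix s' u.
Proof.
case/lastP: s => [|s' []]; first by left => u; rewrite suffix0s.
- case/lastP: s' => [|s'' []].
  + by left => u; rewrite app01E suffix_rcons /= suffix0s.
  + by right; left => u; rewrite app01E !suffix_rcons.
  + by right; right; exists s'' => u; rewrite app01E !suffix_rcons.
- by right; left => u; rewrite app01E suffix_rcons.
Qed.

Lemma suffix_app0_app01_sep s :
  (forall u, ~~ suffix s (app0 u)) \/ (forall u, ~~ suffix s (app01 u)) \/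
  forall z, suffix s z.
Proof.
case/lastP: s => [|s' []]; first by right; right => z; rewrite suffix0s.
- by left => u; rewrite suffix_rcons.
- by right; left => u; rewrite app01E suffix_rcons.
Qed.

Lemma suffix_partitioned_app0_app01 A B :
  suffix_partitioned A -> suffix_partitioned B ->
  suffix_partitioned (map app0 A ++ map app01 B).
Proof.
move=> hA hB; apply: suffix_partitioned_cat.
- exact: suffix_partitioned_map hA suffix_app0_cases.
- exact: suffix_partitioned_map hB suffix_app01_cases.
move=> s; case: (suffix_app0_app01_sep s) => [H|[H|H]];
  [left|right; left|right; right] => // x /mapP [u _ ->]; exact: H.
Qed.

Lemma suffix_partitioned_app01_app0 A B :
  suffix_partitioned A -> suffix_partitioned B ->
  suffix_partitioned (map app01 B ++ map app0 A).
Proof.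
move=> hA hB; apply: suffix_partitioned_cat.
- exact: suffix_partitioned_map hB suffix_app01_cases.
- exact: suffix_partitioned_map hA suffix_app0_cases.
move=> s; case: (suffix_app0_app01_sep s) => [H|[H|H]];
  [right; left|left|right; right] => // x /mapP [u _ ->]; exact: H.
Qed.

(** * The invariant of the recursive decomposition *)

(* The last three clauses locate the end of the list; they determine the word at which
   one block of a longer list crosses over to the other. *)
Record greedy_spec n k a T : Prop := GreedySpec {
  spec_run : greedy_run (inF n k) [:: a] a T;
  spec_stuck : candidates (inF n k) (a :: T) (last a T) = [::];
  spec_partitioned : suffix_partitioned (a :: T);
  spec_last : a != packed_right n k -> last a T = packed_right n k;
  spec_last_right : a = packed_right n k -> exists2 d, last a T = packed n k d &
    [/\ d <= n.+1 - 2 * k, (0 < n.+1 - 2 * k -> d < n.+1 - 2 * k) & (k = 0 -> d = 0)];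
  spec_packed : forall d0, d0 <= n.+1 - 2 * k -> a = packed n k d0 ->
    forall d, d <= n.+1 - 2 * k -> packed n k d \in a :: T }.

Lemma greedy_spec_last_packed n k a T : 2 * k <= n.+1 -> greedy_spec n k a T ->
  exists2 d, d <= n.+1 - 2 * k & last a T = packed n k d.
Proof.
move=> hk [_ _ _ h1 h2 _]; case: (eqVneq a (packed_right n k)) => [e|ne].
  by have [d hd [hd' _ _]] := h2 e; exists d.
by exists (n.+1 - 2 * k); rewrite ?h1.
Qed.

Lemma greedy_spec_last_packed_right n k d T : d + 2 * k <= n ->
  greedy_spec n k (packed n k d) T -> last (packed n k d) T = packed_right n k.
Proof.
move=> hd [g _ _ hlast _ _]; case: (posnP k) => [k0|kpos].
  subst k; have hw : inF n 0 (packed n 0 d) by apply: inF_packed; lia.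
  have /inF0_packed -> := greedy_run_closed g hw (mem_last _ _).
  by rewrite /packed_right (packed0 _ _ 0).
by apply: hlast; apply/eqP => /packed_inj; lia.
Qed.

Lemma greedy_spec_weight0 n a : inF n 0 a -> greedy_spec n 0 a [::].
Proof.
move=> ha; have E := inF0_packed ha; split => //.
- exact: RunNil.
- exact: candidates_inF0.
- exact: suffix_partitioned_small.
- by move=> _; rewrite E; apply: packed0.
- by move=> _; exists 0 => //; split => //; lia.
- by move=> d0 _ _ d _; rewrite E (packed0 _ _ 0) mem_head.
Qed.

Lemma greedy_spec_length1 k a : 0 < k -> inF 1 k a -> greedy_spec 1 k a [::].
Proof.
move=> hk ha; have hk1 : k = 1 by have := inF_weight_bound ha; lia.
subst k; have [d hd E] := inF1_packed ha; have ed : d = 0 by lia. subst d.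
split => //.
- exact: RunNil.
- exact: candidates_inF_len1.
- exact: suffix_partitioned_small.
- by move=> _; exists 0 => //; split => //; lia.
- move=> d0 _ _ d hd'; have -> : d = 0 by lia.
  by rewrite E mem_head.
Qed.

Lemma greedy_spec_app01_other N k b T : inF N k b -> b != packed_right N k ->
  greedy_spec N k b T -> greedy_spec N.+2 k.+1 (app01 b) (map app01 T).
Proof.
move=> hb nb [g c sp hlast _ _]; have hk := inF_weight_bound hb.
have Etop := packed_right_app01 hk.
have he := hlast nb; rewrite he in c.
have kpos : 0 < k.
  case: (posnP k) => // k0; subst k; move: nb.
  by rewrite (inF0_packed hb) /packed_right (packed0 _ _ 0) eqxx.
split.
- exact: (greedy_run_app01 (L0 := [::]) g hb).
- rewrite -map_cons last_map he.
  by apply: (candidates_app01_packed_right (d := N.+1 - 2 * k) _ _ mem_map_app01 c); lia.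
- by rewrite -map_cons; apply: suffix_partitioned_map sp suffix_app01_cases.
- by move=> _; rewrite last_map he Etop.
- by rewrite Etop => /app01_inj E; move: nb; rewrite E eqxx.
- move=> d0 hd0 Ea d hd; exfalso; case: (ltnP d0 (N.+3 - 2 * k.+1)) => h.
    by move: Ea; rewrite packed_app0; [move/esym/app0_neq_app01 | lia].
  have ed : d0 = N.+3 - 2 * k.+1 by lia.
  move: Ea; rewrite ed -/(packed_right N.+2 k.+1) Etop => /app01_inj E.
  by move: nb; rewrite E eqxx.
Qed.

Lemma greedy_spec_app01_full N k b T :
  inF N k b -> b = packed_right N k -> greedy_spec N k b T ->
  last b T = packed N k 0 -> 2 * k = N.+1 ->
  greedy_spec N.+2 k.+1 (app01 b) (map app01 T).
Proof.
move=> hb Eb [g c sp _ _ _] he ek; have Etop := packed_right_app01 (inF_weight_bound hb).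
rewrite he in c; split.
- exact: (greedy_run_app01 (L0 := [::]) g hb).
- rewrite -map_cons last_map he.
  exact: candidates_app01_packed_right (fun _ => erefl) ek mem_map_app01 c.
- by rewrite -map_cons; apply: suffix_partitioned_map sp suffix_app01_cases.
- by rewrite Etop Eb eqxx.
- move=> _; exists 0; first by rewrite last_map he packed_app01.
  by split; lia.
- move=> d0 hd0 Ea d hd; have -> : d = N.+3 - 2 * k.+1 by lia.
  by rewrite -/(packed_right N.+2 k.+1) Etop -Eb mem_head.
Qed.

Section InductionStep.

Variable N : nat.
Hypothesis IH0 : forall k a, inF N k a -> exists T, greedy_spec N k a T.
Hypothesis IH1 : forall k a, inF N.+1 k a -> exists T, greedy_spec N.+1 k a T.

(* Starting from [app01 (packed_right N k)], the first block ends at a packed word with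
   room on its right; the appended 1 then moves into that room and the list continues
   with a block ending in 0, which stops because every packed word ending in 01 has
   already been visited. *)
Lemma greedy_spec_app01_right k b T2 d2 :
  inF N k b -> b = packed_right N k -> greedy_spec N k b T2 ->
  last b T2 = packed N k d2 -> (k = 0 -> d2 = 0) -> d2 + 2 * k <= N ->
  exists T, greedy_spec N.+2 k.+1 (app01 b) T.
Proof.
move=> hb Eb s2 he2 hk0 hdN; have hk := inF_weight_bound hb.
have Etop := packed_right_app01 hk.
have [g2 c2 sp2 _ _ cc2] := s2; rewrite he2 in c2.
pose L1 := map app01 (b :: T2); pose g := packed N.+1 k.+1 d2.
have [r hr] :
    exists r, candidates (inF N.+2 k.+1) L1 (app01 (packed N k d2)) = app0 g :: r.
  apply: candidates_app01_packed hk0 hdN mem_map_app01 c2 _.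
  by rewrite mem_app0_map_app01.
have hg : inF N.+1 k.+1 g by apply: inF_packed; lia.
have [T1 s1] := IH1 hg; have [g1 c1 sp1 _ _ cc1] := s1.
have hk1 : 2 * k.+1 <= N.+2 by lia.
have [d1 hd1 he1] := greedy_spec_last_packed hk1 s1.
have hL0 u : size u = N.+1 -> (app0 u \in L1 ++ map app0 (g :: T1)) = (u \in g :: T1).
  by move=> _; exact: (mem_app0_cat _ u (all_last_map_app01 _)).
have hd1N : d1 + 2 * k <= N by lia.
rewrite he1 in c1; have := candidates_app0_packed hd1N hL0 c1.
rewrite mem_cat map_f ?(cc2 (N.+1 - 2 * k)) //; try lia; move=> hcross.
exists (map app01 T2 ++ app0 g :: map app0 T1).
have EL : app01 b :: (map app01 T2 ++ app0 g :: map app0 T1) = L1 ++ map app0 (g :: T1).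
  by [].
have Elast :
    last (app01 b) (map app01 T2 ++ app0 g :: map app0 T1) = app0 (packed N.+1 k.+1 d1).
  by rewrite last_cat /= last_map he1.
split.
- apply: greedy_run_cat; first exact: (greedy_run_app01 (L0 := [::]) g2 hb).
  rewrite last_map he2; apply: (RunCons hr).
  by rewrite -cats1; exact: greedy_run_app0 g1 hg (all_last_map_app01 _).
- by rewrite EL Elast.
- by rewrite EL; exact: suffix_partitioned_app01_app0.
- by rewrite Etop Eb eqxx.
- move=> _; exists d1; first by rewrite Elast -packed_app0 //; lia.
  by split; lia.
- move=> d0 hd0 Ea d hd; case: (ltnP d (N.+3 - 2 * k.+1)) => hdm.
    rewrite packed_app0; last by lia.
    by rewrite EL mem_cat map_f ?orbT // (cc1 d2) //; lia.
  have -> : d = N.+3 - 2 * k.+1 by lia.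
  by rewrite -/(packed_right N.+2 k.+1) Etop -Eb mem_head.
Qed.

Lemma greedy_spec_app01 k b : inF N k b -> exists T, greedy_spec N.+2 k.+1 (app01 b) T.
Proof.
move=> hb; have [T2 s2] := IH0 hb.
case: (eqVneq b (packed_right N k)) => [Eb|nb].
  have [d2 he2 [hd2 hd2m hk0]] := spec_last_right s2 Eb.
  case: (leqP (d2 + 2 * k) N) => hdN.
    exact: greedy_spec_app01_right hb Eb s2 he2 hk0 hdN.
  have [ed2 ek] : d2 = 0 /\ 2 * k = N.+1 by have := inF_weight_bound hb; lia.
  by subst d2; exists (map app01 T2); exact: greedy_spec_app01_full hb Eb s2 he2 ek.
by exists (map app01 T2); exact: greedy_spec_app01_other.
Qed.

(* Starting from [app0 a'], the first block ends at [app0] of a packed word; its rightmost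
   1 moves into the appended 0 and the list continues with a block ending in 01 up to
   [packed_right]. *)
Lemma greedy_spec_app0 k a' :
  inF N.+1 k.+1 a' -> exists T, greedy_spec N.+2 k.+1 (app0 a') T.
Proof.
move=> ha'; have hk := inF_weight_bound ha'.
have [T1 s1] := IH1 ha'; have [g1 c1 sp1 _ _ cc1] := s1.
have [d1 hd1 he1] := greedy_spec_last_packed hk s1.
have hd1' : d1 + 2 * k <= N by lia.
pose b := packed N k d1; have hb : inF N k b by apply: inF_packed; lia.
have [T2 s2] := IH0 hb; have [g2 c2 sp2 _ _ _] := s2.
have he2 := greedy_spec_last_packed_right hd1' s2.
pose L0 := map app0 (a' :: T1).
have hL0 := @mem_map_app0 N.+1 (a' :: T1).
rewrite he1 in c1; have := candidates_app0_packed hd1' hL0 c1.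
rewrite mem_app01_map_app0 => -[r hr].
have hL1 u : size u = N -> (app01 u \in L0 ++ map app01 (b :: T2)) = (u \in b :: T2).
  by move=> _; exact: (mem_app01_cat _ u (all_last_map_app0 _)).
exists (map app0 T1 ++ app01 b :: map app01 T2).
have EL : app0 a' :: (map app0 T1 ++ app01 b :: map app01 T2) = L0 ++ map app01 (b :: T2).
  by [].
have Elast : last (app0 a') (map app0 T1 ++ app01 b :: map app01 T2)
  = app01 (packed_right N k) by rewrite last_cat /= last_map he2.
have Etop : packed_right N.+2 k.+1 = app01 (packed_right N k).
  by apply: packed_right_app01; lia.
split.
- apply: greedy_run_cat; first exact: (greedy_run_app0 (L0 := [::]) g1 ha').
  rewrite last_map he1; apply: (RunCons hr).
  by rewrite -cats1; exact: greedy_run_app01 g2 hb (all_last_map_app0 _).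
- rewrite EL Elast he2 in c2 *; case: (posnP k) => [k0|kpos].
    subst k; rewrite /packed_right (packed0 _ _ 0) in c2 *.
    apply: candidates_app01_packed0 hL1 c2 _ => j hj.
    have [d0 hd0 Ea'] := inF1_packed ha'.
    by rewrite mem_cat map_f ?(cc1 d0 hd0 Ea') //; lia.
  by apply: (candidates_app01_packed_right (d := N.+1 - 2 * k) _ _ hL1 c2); lia.
- by rewrite EL; exact: suffix_partitioned_app0_app01.
- by move=> _; rewrite Elast Etop.
- by rewrite Etop => /app0_neq_app01.
- move=> d0 hd0 Ea d hd.
  have hd0' : d0 < N.+3 - 2 * k.+1.
    case: (ltnP d0 (N.+3 - 2 * k.+1)) => // h; have ed : d0 = N.+3 - 2 * k.+1 by lia.
    by move: Ea; rewrite ed -/(packed_right N.+2 k.+1) Etop => /app0_neq_app01.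
  have Ea' : a' = packed N.+1 k.+1 d0 by apply: app0_inj; rewrite Ea -packed_app0 //; lia.
  case: (ltnP d (N.+3 - 2 * k.+1)) => hdm.
    rewrite packed_app0; last by lia.
    by rewrite EL mem_cat map_f // (cc1 d0) //; lia.
  have -> : d = N.+3 - 2 * k.+1 by lia.
  by rewrite -/(packed_right N.+2 k.+1) Etop -Elast mem_last.
Qed.

End InductionStep.

Lemma greedy_spec_exists n k a : inF n k a -> exists T, greedy_spec n k a T.
Proof.
elim/ltn_ind: n k a => n IH [|k] a ha; first by exists [::]; exact: greedy_spec_weight0.
case: n IH ha => [|[|N]] IH ha.
- by have := inF_weight_bound ha; lia.
- by exists [::]; exact: greedy_spec_length1.
- have IH0 := IH N (leqW (ltnSn _)); have IH1 := IH N.+1 (ltnSn _).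
  case: (inF_app_cases ha) => [[a' -> ha']|[k' [b [[-> ->] hb]]]].
  + exact: greedy_spec_app0 IH0 IH1 _ _ ha'.
  + exact: greedy_spec_app01 IH0 IH1 _ _ hb.
Qed.

Theorem lemma2 (n k : nat) (alpha : word) :
  2 * k - 1 <= n -> inF n k alpha -> suffix_partitioned (calF n k alpha).
Proof.
move=> _ ha; have [T [g c sp _ _ _]] := greedy_spec_exists ha.
rewrite /calF /greedy (greedy_aux_run _ g c) /=.
exact: suffix_partitioned_take (2 ^ size alpha).+1 sp.
Qed.
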